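(* Let $\mu$ be a purely atomic positive $\sigma$-finite measure on $(\Omega,\mathcal B)$ whose range $\{\mu(A):A\in\mathcal B\}$ is an interval, and such that for every $\varepsilon>0$, $\mu\big(\bigcup\{A_n: A_n\text{ an atom},\ \mu(A_n)>\varepsilon\}\big)<\infty$. Then for every $t<\mu(\Omega)$ there is a set $C\in\mathcal B$ with $\mu(C)\ge t$ such that the range of the restriction $\mu|_C$ is a finite interval.
   Context: An atom of $\mu$ is a set $A$ with $\mu(A)>0$ such that each measurable subset of $A$ has measure $0$ or $\mu(A)$; $\mu$ is purely atomic if $\Omega$ is, up to a null set, the union of the atoms. $\mu|_C$ denotes $A\mapsto\mu(A\cap C)$. *)

From HB Require Import structures.
From mathcomp Require Import all_boot all_order all_algebra.
From mathcomp Require Import all_classical all_reals all_analysis.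
Set Implicit Arguments. Unset Strict Implicit. Unset Printing Implicit Defensive.
Import Order.TTheory GRing.Theory Num.Theory.
Local Open Scope classical_set_scope.
Local Open Scope ring_scope.
Local Open Scope ereal_scope.

Definition atom d (T : measurableType d) (R : realType)
  (mu : {measure set T -> \bar R}) (A : set T) : Prop :=
  [/\ measurable A, 0 < mu A &
      forall B, measurable B -> B `<=` A -> mu B = 0 \/ mu B = mu A].

Definition purely_atomic d (T : measurableType d) (R : realType)
  (mu : {measure set T -> \bar R}) : Prop :=
  exists N, [/\ measurable N, mu N = 0 & ~` N `<=` \bigcup_(A in atom mu) A].

Definition ereal_interval (R : realType) (S : set (\bar R)) : Prop :=
  forall x y z, S x -> S y -> x <= z -> z <= y -> S z.

Definition mrange d (T : measurableType d) (R : realType)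
  (mu : {measure set T -> \bar R}) : set (\bar R) :=
  [set mu A | A in measurable].

Definition mrange_restr d (T : measurableType d) (R : realType)
  (mu : {measure set T -> \bar R}) (C : set T) : set (\bar R) :=
  [set mu (A `&` C) | A in measurable].

From HB Require Import structures.
From mathcomp Require Import all_boot all_order all_algebra.
From mathcomp Require Import all_classical all_reals all_analysis.
From mathcomp Require Import lra.
Import Order.TTheory GRing.Theory Num.Theory.
Local Open Scope classical_set_scope.
Local Open Scope ring_scope.
Local Open Scope ereal_scope.

(* If mu(Omega) < oo, take C = Omega.  Otherwise fix s = max(t, 0)
   and scan the pieces greedily, keeping A_n whenever the mass collected so far
   plus twice mu(A_n) is at most s.  The union C of the kept pieces has mass
   exactly s: if it fell short by 2 eps, every rejected piece would have mass
   > eps, so Omega would be covered by a null set, C and a set of finite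
   measure.  Any r in [0, s] is the mass of a second greedy scan over the kept
   pieces with target r: the factor 2 guarantees that its remaining budget
   never exceeds that of the first scan, so in the limit it collects r. *)

Lemma ge0_lty_EFin {R : realType} {x : \bar R} :
  0 <= x -> x < +oo -> exists r : R, x = r%:E.
Proof. by case: x => [r| |] // _ _; exists r. Qed.

Section measure_facts.
Context {d} {T : measurableType d} {R : realType} (mu : {measure set T -> \bar R}).

Lemma nondecreasing_measure_bigcup_le (F : nat -> set T) (c : \bar R) :
  (forall n, measurable (F n)) -> nondecreasing_seq F ->
  (forall n, mu (F n) <= c) -> mu (\bigcup_n F n) <= c.
Proof.
move=> mF ndF le_c.
have mu_cvg := @nondecreasing_cvg_mu _ _ _ mu _ mF (bigcupT_measurable _ mF) ndF.
rewrite -(cvg_lim _ mu_cvg) //; apply: lime_le; last exact: nearW.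
by apply/cvg_ex; exists (mu (\bigcup_n F n)).
Qed.

Lemma mrange_restrT : mrange_restr mu setT = mrange mu.
Proof. by apply/seteqP; split => x [B mB <-]; exists B => //; rewrite setIT. Qed.

Lemma ereal_interval_mrange_restr (C : set T) : measurable C ->
  (forall z, 0 <= z <= mu C -> exists2 B, measurable B & B `<=` C /\ mu B = z) ->
  ereal_interval (mrange_restr mu C).
Proof.
move=> mC hit x y z [B1 mB1 <-] [B2 mB2 <-] xz zy.
have z0 : 0 <= z := le_trans (measure_ge0 _ _) xz.
have /hit[B mB [BC <-]] : 0 <= z <= mu C.
  rewrite z0; apply: le_trans zy _; apply: le_measure; rewrite ?inE //.
  exact: measurableI.
by exists B => //; rewrite setIidl.
Qed.

End measure_facts.

Section greedy_selection.
Context {d} {T : measurableType d} {R : realType} (mu : {measure set T -> \bar R}).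
Variables (A : nat -> set T) (keep : set T -> nat -> bool).

Fixpoint greedy n : set T :=
  if n is m.+1 then
    let G := greedy m in if keep G m then G `|` A m else G
  else set0.

Lemma greedy_measurable : (forall n, measurable (A n)) ->
  forall n, measurable (greedy n).
Proof.
move=> mA; elim=> [|n IH] /=; first exact: measurable0.
by case: ifP => _ //; exact: measurableU.
Qed.

Lemma greedy_nondecreasing : nondecreasing_seq greedy.
Proof.
by apply/nondecreasing_seqP => n /=; case: ifP => _ //; apply/subsetPset/subsetUl.
Qed.

Lemma sub_greedyS n : keep (greedy n) n -> A n `<=` greedy n.+1.
Proof. by move=> keep_n /=; rewrite keep_n; exact: subsetUr. Qed.

Lemma mem_greedy n x : greedy n x ->
  exists2 i, (i < n)%N & keep (greedy i) i /\ A i x.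
Proof.
elim: n => [|n IH] //=.
have IHS : greedy n x -> exists2 i, (i < n.+1)%N & keep (greedy i) i /\ A i x.
  by move=> /IH[i lt_in Pi]; exists i => //; exact: ltnW.
by case: ifP => [keep_n [Gx|An]|_ Gx]; [exact: IHS | exists n | exact: IHS].
Qed.

Hypotheses (mA : forall n, measurable (A n)) (tA : trivIset setT A).

Lemma measure_greedyS n : mu (greedy n.+1) =
  mu (greedy n) + (if keep (greedy n) n then mu (A n) else 0).
Proof.
rewrite /=; case: ifP => _; last by rewrite adde0.
rewrite measureU //; first exact: greedy_measurable.
apply/seteqP; split => // x [/mem_greedy[i lt_in [_ Ai]] An].
by move: lt_in; rewrite (tA i n I I) ?ltnn //; exists x.
Qed.

Lemma measure_greedy_le (s : \bar R) : 0 <= s ->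
  (forall G n, keep G n -> mu G + mu (A n) <= s) -> forall n, mu (greedy n) <= s.
Proof.
move=> s0 keep_le; elim=> [|n IH]; first by rewrite measure0.
by rewrite measure_greedyS; case: ifP => [/keep_le|_] //; rewrite adde0.
Qed.

Lemma measure_bigcup_greedy_le (s : \bar R) : 0 <= s ->
  (forall G n, keep G n -> mu G + mu (A n) <= s) -> mu (\bigcup_n greedy n) <= s.
Proof.
move=> s0 keep_le; apply: nondecreasing_measure_bigcup_le.
- exact: greedy_measurable.
- exact: greedy_nondecreasing.
- exact: measure_greedy_le.
Qed.

End greedy_selection.

Section greedy_fill.
Context {d} {T : measurableType d} {R : realType} (mu : {measure set T -> \bar R}).
Variable A : nat -> set T.
Hypotheses (mA : forall n, measurable (A n)) (tA : trivIset setT A).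
Hypothesis null_rest : mu (~` \bigcup_n A n) = 0.
Hypothesis small_pieces : forall eps : R, (0 < eps)%R ->
  mu (\bigcup_(n in [set n | eps%:E < mu (A n)]) A n) < +oo.
Hypothesis muT : mu setT = +oo.
Variable s : R.
Hypothesis s_ge0 : (0 <= s)%R.

Lemma measure_piece_lty n : mu (A n) < +oo.
Proof.
rewrite ltNge leye_eq; apply/negP => /eqP An_oo.
have : mu (A n) <= mu (\bigcup_(k in [set k | 1%:E < mu (A k)]) A k).
  apply: le_measure; rewrite ?inE //; first exact: bigcup_measurable.
  by apply: bigcup_sup; rewrite /= An_oo ltry.
by rewrite An_oo leye_eq => /eqP big_oo; move: (small_pieces _ ltr01); rewrite big_oo.
Qed.

Definition fill_keep G n := mu G + mu (A n) + mu (A n) <= s%:E.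

Local Notation F := (greedy A fill_keep).

Definition fill := \bigcup_n F n.

Lemma fill_measurable : measurable fill.
Proof. exact/bigcupT_measurable/greedy_measurable. Qed.

Lemma measure_fill_le : mu fill <= s%:E.
Proof.
by apply: measure_bigcup_greedy_le => // G n; apply: le_trans; rewrite leeDl.
Qed.

Lemma measure_greedy_le_fill n : mu (F n) <= mu fill.
Proof.
apply: le_measure; rewrite ?inE; [exact: greedy_measurable | exact: fill_measurable |].
exact: bigcup_sup.
Qed.

Lemma measure_greedy_fill_lty n : mu (F n) < +oo.
Proof.
exact: le_lt_trans (measure_greedy_le_fill n) (le_lt_trans measure_fill_le (ltry s)).
Qed.

Lemma rejected_piece_gt (g : R) n : mu fill = g%:E -> ~~ fill_keep (F n) n ->
  ((s - g) / 2)%:E < mu (A n).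
Proof.
move=> fill_g; rewrite /fill_keep.
have [u Fn_u] := ge0_lty_EFin (measure_ge0 mu (F n)) (measure_greedy_fill_lty n).
have [a An_a] := ge0_lty_EFin (measure_ge0 mu (A n)) (measure_piece_lty n).
have := measure_greedy_le_fill n.
rewrite fill_g Fn_u An_a -!EFinD !lee_fin lte_fin -ltNge; lra.
Qed.

Lemma measure_fill : mu fill = s%:E.
Proof.
apply/eqP; rewrite eq_le measure_fill_le /= leNgt; apply/negP => fill_lt_s.
have [g fill_g] := ge0_lty_EFin (measure_ge0 mu fill) (lt_trans fill_lt_s (ltry s)).
pose eps := ((s - g) / 2)%R.
have eps_gt0 : (0 < eps)%R by rewrite divr_gt0 // subr_gt0 -lte_fin -fill_g.
pose L := \bigcup_(n in [set n | eps%:E < mu (A n)]) A n.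
have mN : measurable (~` \bigcup_n A n) by exact/measurableC/bigcupT_measurable.
have mL : measurable L by apply: bigcup_measurable.
have cover : setT `<=` (~` \bigcup_n A n) `|` fill `|` L.
  move=> x _; have [[n _ Anx]|] := pselect ((\bigcup_n A n) x); last by left; left.
  have [keep_n|reject_n] := boolP (fill_keep (F n) n).
    by left; right; exists n.+1 => //; exact: sub_greedyS.
  by right; exists n => //; exact: rejected_piece_gt.
have : mu setT <= mu (~` \bigcup_n A n) + mu fill + mu L.
  apply: le_trans (le_measure _ _ _ cover) _; rewrite ?inE //.
    by apply: measurableU => //; exact/measurableU/fill_measurable.
  apply: le_trans (measureU2 _ _ _) _ => //; first exact/measurableU/fill_measurable.
  by rewrite leeD2r // measureU2 //; exact: fill_measurable.
rewrite muT null_rest add0e fill_g leye_eq => /eqP L_oo.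
by move: L_oo (small_pieces _ eps_gt0); rewrite -/L; case: (mu L).
Qed.

Definition part_keep (r : R) G n :=
  fill_keep (F n) n && (mu G + mu (A n) <= r%:E).

Local Notation P r := (greedy A (part_keep r)).

Lemma measure_greedy_part_le (r : R) n : (0 <= r)%R -> mu (P r n) <= r%:E.
Proof. by move=> r0; apply: measure_greedy_le; rewrite ?lee_fin // => G k /andP[]. Qed.

(* When the first scan keeps A_n but the second does not,
   r - mu (P r n) < mu (A n) <= (s - mu (F n)) / 2, so the first budget stays
   the larger one after paying for A_n. *)
Lemma greedy_budget (r : R) n : (0 <= r)%R -> (r <= s)%R ->
  r%:E + mu (F n) <= s%:E + mu (P r n).
Proof.
move=> r0 r_le_s; elim: n => [|n IH]; first by rewrite /= measure0 !addr0 lee_fin.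
rewrite !measure_greedyS //.
have [u Fn_u] := ge0_lty_EFin (measure_ge0 mu (F n)) (measure_greedy_fill_lty n).
have [v Pn_v] := ge0_lty_EFin (measure_ge0 mu (P r n))
  (le_lt_trans (measure_greedy_part_le r n r0) (ltry r)).
have [a An_a] := ge0_lty_EFin (measure_ge0 mu (A n)) (measure_piece_lty n).
move: IH; rewrite /part_keep /fill_keep Fn_u Pn_v An_a -!EFinD !lee_fin => IH.
by case: ifP => keep1; rewrite ?andTb ?andFb; [case: ifP => keep2|];
  rewrite ?addr0 -?EFinD lee_fin; lra.
Qed.

Definition part (r : R) := \bigcup_n P r n.

Lemma part_measurable (r : R) : measurable (part r).
Proof. exact/bigcupT_measurable/greedy_measurable. Qed.

Lemma part_sub_fill (r : R) : part r `<=` fill.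
Proof.
move=> x [n _ /mem_greedy[i _ [/andP[keep_i _] Ai]]].
by exists i.+1 => //; exact: sub_greedyS.
Qed.

Lemma measure_part_le (r : R) : (0 <= r)%R -> mu (part r) <= r%:E.
Proof.
by move=> r0; apply: measure_bigcup_greedy_le; rewrite ?lee_fin // => G k /andP[].
Qed.

Lemma measure_part_ge (r : R) : (0 <= r)%R -> (r <= s)%R -> r%:E <= mu (part r).
Proof.
move=> r0 r_le_s.
have [b part_b] := ge0_lty_EFin (measure_ge0 mu _)
  (le_lt_trans (measure_part_le r r0) (ltry r)).
suff : mu fill <= (s + b - r)%:E by rewrite measure_fill part_b !lee_fin; lra.
apply: nondecreasing_measure_bigcup_le => [n||n].
- exact: greedy_measurable.
- exact: greedy_nondecreasing.
have [u Fn_u] := ge0_lty_EFin (measure_ge0 mu (F n)) (measure_greedy_fill_lty n).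
have [v Pn_v] := ge0_lty_EFin (measure_ge0 mu (P r n))
  (le_lt_trans (measure_greedy_part_le r n r0) (ltry r)).
have Pn_le_part : mu (P r n) <= mu (part r).
  apply: le_measure; rewrite ?inE; [exact: greedy_measurable | exact: part_measurable |].
  exact: bigcup_sup.
move: Pn_le_part (greedy_budget r n r0 r_le_s).
by rewrite Fn_u Pn_v part_b -!EFinD !lee_fin; lra.
Qed.

Lemma fill_subset_of_measure z : 0 <= z <= mu fill ->
  exists2 B, measurable B & B `<=` fill /\ mu B = z.
Proof.
rewrite measure_fill => /andP[z0 z_le_s].
have [r z_r] := ge0_lty_EFin z0 (le_lt_trans z_le_s (ltry s)).
move: z0 z_le_s; rewrite z_r !lee_fin => r0 r_le_s.
exists (part r); first exact: part_measurable.
split; first exact: part_sub_fill.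
by apply/eqP; rewrite eq_le measure_part_le // measure_part_ge.
Qed.

End greedy_fill.

Theorem lemma3p1 (d : measure_display) (T : measurableType d) (R : realType)
  (mu : {measure set T -> \bar R}) :
  sigma_finite setT mu ->
  purely_atomic mu ->
  ereal_interval (mrange mu) ->
  (exists A : nat -> set T,
     [/\ forall n, A n = set0 \/ atom mu (A n),
         trivIset setT A,
         mu (~` \bigcup_n A n) = 0 &
         forall eps : R, (0 < eps)%R ->
           mu (\bigcup_(n in [set n | eps%:E < mu (A n)]) A n) < +oo]) ->
  forall t : R, t%:E < mu setT ->
  exists C, [/\ measurable C, t%:E <= mu C,
                ereal_interval (mrange_restr mu C) & mu C < +oo].
Proof.
move=> _ _ range_interval [A [atomA tA null_rest small_pieces]] t t_lt_muT.
have mA n : measurable (A n) by case: (atomA n) => [->|[]].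
have [muT|muT] := eqVneq (mu setT) +oo; last first.
  exists setT; split => //; first exact: ltW.
    by rewrite mrange_restrT.
  by rewrite lt_neqAle muT leey.
pose s := Num.max t 0%R.
have s_ge0 : (0 <= s)%R by rewrite le_max lexx orbT.
have muF : mu (fill mu A s) = s%:E by exact: measure_fill.
exists (fill mu A s); split.
- exact: fill_measurable.
- by rewrite muF lee_fin le_max lexx.
- apply: ereal_interval_mrange_restr; first exact: fill_measurable.
  exact: fill_subset_of_measure.
- by rewrite muF ltry.
Qed.
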